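(* For every $n\ge1$, let $\alpha_n$ be the minimal real zero of $\phi_n(x)$. Then $\mathrm{QEC}(K_1+P_n)=-2\alpha_n-2$.
   Context: For a finite connected graph $G=(V,E)$ with $|V|\ge2$, let $d(i,j)$ be the graph distance and $D=[d(i,j)]_{i,j\in V}$ the distance matrix. The quadratic embedding constant is $\mathrm{QEC}(G)=\max\{\langle f,Df\rangle : f\in\mathbb{R}^V,\ \langle f,f\rangle=1,\ \langle\mathbf 1,f\rangle=0\}$, where $\mathbf 1$ is the all-ones vector. The fan graph $K_1+P_n$ has vertex set $\{0,1,\dots,n\}$ and edges $\{i,i+1\}$ ($1\le i\le n-1$) and $\{0,i\}$ ($1\le i\le n$). $U_n(x)$ is the Chebyshev polynomial of the second kind ($U_n(\cos\theta)=\sin((n+1)\theta)/\sin\theta$, $U_{-1}=0$), and $\phi_n(x)=((n+1)x^2-3x-n)U_n(x)+(x+1)(U_{n-1}(x)+1)$, a polynomial of degree $n+2$ all of whose zeros are real. *)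

From HB Require Import structures.
From mathcomp Require Import all_boot all_order all_algebra.
From mathcomp Require Import classical_sets reals.
Set Implicit Arguments. Unset Strict Implicit. Unset Printing Implicit Defensive.
Import Order.TTheory GRing.Theory Num.Theory.
Local Open Scope ring_scope.

Section Graph.
Variable T : finType.
Variable e : rel T.

Fixpoint ball (i : T) (k : nat) : {set T} :=
  match k with
  | 0 => [set i]
  | k'.+1 => ball i k' :|: [set y | [exists x in ball i k', e x y]]
  end.

(* graph distance: least k such that j is within k steps of i
   (for a connected graph on T this is < #|T|). *)
Definition gdist (i j : T) : nat :=
  find (fun k => j \in ball i k) (iota 0 #|T|).
End Graph.

(* The fan graph K_1 + P_n on vertex set {0,...,n} = 'I_n.+1:
   edges {i,i+1} (1 <= i <= n-1) and {0,i} (1 <= i <= n). *)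
Definition fan_adj (n : nat) : rel 'I_n.+1 :=
  fun x y =>
    [|| ((x == 0%N :> nat) && (y != 0%N :> nat)),
        ((y == 0%N :> nat) && (x != 0%N :> nat)),
        ((x != 0%N :> nat) && (y == x.+1 :> nat))
      | ((y != 0%N :> nat) && (x == y.+1 :> nat))].

Definition fan_distmx (R : realType) (n : nat) : 'M[R]_n.+1 :=
  \matrix_(i, j) (gdist (@fan_adj n) i j)%:R.

(* quadratic embedding constant of a graph with distance matrix D:
   max { <f, D f> : <f,f> = 1, <1,f> = 0 } (the max exists by compactness,
   so it coincides with the supremum). *)
Definition QEC (R : realType) (m : nat) (D : 'M[R]_m) : R :=
  sup [set q | exists f : 'cV[R]_m,
        [/\ (f^T *m f) 0 0 = 1, \sum_i f i 0 = 0 & q = (f^T *m D *m f) 0 0]].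

(* Chebyshev polynomials of the second kind: U_0 = 1, U_1 = 2X,
   U_{k+2} = 2X U_{k+1} - U_k. chebU2 k = (U_k, U_{k+1}). *)
Fixpoint chebU2 (R : ringType) (k : nat) : {poly R} * {poly R} :=
  match k with
  | 0 => (1, 2%:R *: 'X)
  | k'.+1 => let: (a, b) := @chebU2 R k' in (b, 2%:R *: 'X * b - a)
  end.
Definition chebU (R : ringType) (k : nat) : {poly R} := (@chebU2 R k).1.

Definition phi (R : ringType) (n : nat) : {poly R} :=
  (n.+1%:R *: 'X^2 - 3%:R *: 'X - n%:R%:P) * @chebU R n
  + ('X + 1) * (@chebU R n.-1 + 1).

From HB Require Import structures.
From mathcomp Require Import all_boot all_order all_algebra.
From mathcomp Require Import classical_sets reals.
From mathcomp Require Import ring lra zify.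
Import Order.TTheory GRing.Theory Num.Theory.
Set Implicit Arguments. Unset Strict Implicit. Unset Printing Implicit Defensive.
Local Open Scope ring_scope.

(* A vector orthogonal to [1] on the fan is [(- \sum_i v_i, v)] with [v] on the path, and then
   [<f, f> = v C v^T] and [<f, D f> = - v B v^T] with [C = I + J] and [B = 2I + A(P_n)].  So the
   QEC is the supremum [g] of the generalized Rayleigh quotient [- v B v^T / v C v^T], which is
   the largest parameter for which the pencil [B + g C] is singular.  For [g = -2x - 2] a kernel
   vector satisfies [v_(j+1) = 2x v_j - v_(j-1) + (2x + 2) \sum_i v_i], so it is a combination
   of [U_(j-1)(x)] and its partial sums; the two boundary conditions form a 2x2 system whose
   determinant is [- phi_n(x) / (x - 1)^2].  Hence the singular parameters are [-2x - 2] for the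
   roots [x <> 1] of [phi_n], and the largest one comes from the minimal root. *)

Section ChebyshevSequence.
Variables (R : comNzRingType) (x : R).

Fixpoint cheb_pair (k : nat) : R * R :=
  if k is k'.+1 then let: (a, b) := cheb_pair k' in (b, 2 * x * b - a) else (0, 1).

(* [cheb k] is U_{k-1}(x), with U_{-1} = 0. *)
Definition cheb k := (cheb_pair k).1.

Definition cheb_sum k := \sum_(i < k) cheb i.

Lemma cheb0 : cheb 0 = 0. Proof. by []. Qed.
Lemma cheb1 : cheb 1 = 1. Proof. by []. Qed.

Lemma chebSS k : cheb k.+2 = 2 * x * cheb k.+1 - cheb k.
Proof. by rewrite /cheb /=; case: (cheb_pair k). Qed.

Lemma horner_chebU k : (chebU R k).[x] = cheb k.+1.
Proof.
suff: (chebU2 R k).1.[x] = cheb k.+1 /\ (chebU2 R k).2.[x] = cheb k.+2 by case.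
elim: k => [|k]; first by rewrite /= !hornerE chebSS cheb1 cheb0; split=> //; ring.
rewrite /=; case: (chebU2 R k) => a b /= [ha hb].
by rewrite !hornerE ha hb (chebSS k.+1); split=> //; ring.
Qed.

Lemma cheb_sumSS k : cheb_sum k.+2 = 2 * x * cheb_sum k.+1 - cheb_sum k + 1.
Proof.
rewrite /cheb_sum !big_ord_recl cheb0 cheb1.
rewrite (eq_bigr (fun i : 'I_k => 2 * x * cheb (lift ord0 i) - cheb i)) => [|i _].
  by rewrite sumrB -mulr_sumr; ring.
exact: chebSS.
Qed.

Lemma cheb_cassini k : cheb k.+1 ^+ 2 - 2 * x * cheb k.+1 * cheb k + cheb k ^+ 2 = 1.
Proof. by elim: k => [|k IH]; rewrite ?chebSS -?[RHS]IH /cheb /=; ring. Qed.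

Lemma cheb_sum_closed k : 2 * (x - 1) * cheb_sum k.+1 = cheb k.+1 - cheb k - 1.
Proof.
elim: k => [|k IH]; first by rewrite /cheb_sum big_ord1 cheb0 cheb1; ring.
by rewrite /cheb_sum big_ord_recr /= mulrDr IH chebSS; ring.
Qed.

Lemma cheb_sum_sum_closed k :
  2 * (x - 1) * \sum_(i < k.+1) cheb_sum i = cheb k - k%:R.
Proof.
elim: k => [|k IH]; first by rewrite big_ord1 /cheb_sum big_ord0 cheb0; ring.
by rewrite big_ord_recr /= mulrDr IH cheb_sum_closed -natr1; ring.
Qed.

Lemma cheb_recurrence (w : nat -> R) (c : R) (M : nat) : w 0 = 0 ->
  (forall m, (m < M)%N -> w m.+2 = 2 * x * w m.+1 - w m + c) ->
  forall m, (m <= M.+1)%N -> w m = w 1%N * cheb m + c * cheb_sum m.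
Proof.
move=> w0 wS; suff H m : (m <= M)%N ->
    w m = w 1%N * cheb m + c * cheb_sum m /\ w m.+1 = w 1%N * cheb m.+1 + c * cheb_sum m.+1.
  by case=> [|m] hm; [case: (H 0%N) | case: (H m)].
elim: m => [|m IH] hm.
  by rewrite w0 cheb0 cheb1 /cheb_sum big_ord0 big_ord1 cheb0; split; ring.
have [IH0 IH1] := IH (ltnW hm); split=> //.
by rewrite wS // IH1 IH0 chebSS cheb_sumSS; ring.
Qed.

Lemma sum_cheb_comb (p c : R) k :
  \sum_(i < k) (p * cheb i.+1 + c * cheb_sum i.+1) =
  p * cheb_sum k.+1 + c * \sum_(i < k.+1) cheb_sum i.
Proof.
rewrite big_split -!mulr_sumr [cheb_sum k.+1]big_ord_recl [in RHS]big_ord_recl.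
by rewrite cheb0 /cheb_sum big_ord0 !add0r.
Qed.

(* With [k = 2x + 2], the determinant of the linear system in [(v_1, \sum_i v_i)] given by
   the two boundary conditions of a kernel vector [v] of the fan pencil on [n] path vertices. *)
Definition fan_det n := cheb n.+1 * ((2 * x + 2) * \sum_(i < n.+1) cheb_sum i - 1)
  - (2 * x + 2) * cheb_sum n.+1 ^+ 2.

Lemma horner_phi n : (phi R n.+1).[x] =
  (n.+2%:R * x ^+ 2 - 3 * x - n.+1%:R) * cheb n.+2 + (x + 1) * (cheb n.+1 + 1).
Proof. by rewrite /phi !hornerE !horner_chebU /=; ring. Qed.

Lemma fan_det_phi n : 2 * (x - 1) ^+ 2 * fan_det n.+1 = - 2 * (phi R n.+1).[x].
Proof.
have hP := cheb_sum_closed n.+1.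
have hZ := cheb_sum_sum_closed n.+1.
have hC := cheb_cassini n.+1.
set a := cheb n.+2 in hP hC *; set b := cheb n.+1 in hP hZ hC *.
set P := cheb_sum n.+2 in hP *; set Z := \sum_(i < n.+2) cheb_sum i in hZ *.
rewrite horner_phi /fan_det -/a -/b -/P -/Z.
transitivity ((x - 1) * (2 * x + 2) * a * (2 * (x - 1) * Z) - 2 * (x - 1) ^+ 2 * a
   - (x + 1) * (2 * (x - 1) * P) ^+ 2); first by ring.
have hC0 : (x + 1) * (a ^+ 2 - 2 * x * a * b + b ^+ 2 - 1) = 0 by rewrite hC subrr mulr0.
by rewrite hP hZ -natr1 -[RHS]subr0 -hC0; ring.
Qed.

End ChebyshevSequence.

Section TwoByTwo.
Variables (R : comNzRingType) (a b c d : R).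

Lemma det2_cramer p q : a * p + b * q = 0 -> c * p + d * q = 0 ->
  (a * d - b * c) * p = 0 /\ (a * d - b * c) * q = 0.
Proof.
move=> e1 e2; split.
  by transitivity (d * (a * p + b * q) - b * (c * p + d * q)); [ring | rewrite e1 e2; ring].
by transitivity (a * (c * p + d * q) - c * (a * p + b * q)); [ring | rewrite e1 e2; ring].
Qed.

Lemma det2_kernel : a * d - b * c = 0 ->
  exists2 pq : R * R, pq != (0, 0) & a * pq.1 + b * pq.2 = 0 /\ c * pq.1 + d * pq.2 = 0.
Proof.
move=> det0; have [[a0 b0]|ab_neq0] := eqVneq (a, b) (0, 0).
  have [[c0 d0]|cd_neq0] := eqVneq (c, d) (0, 0).
    by exists (1, 0); [rewrite xpair_eqE oner_eq0 | rewrite /= a0 b0 c0 d0; split; ring].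
  exists (d, - c); last by rewrite /= a0 b0; split; ring.
  by rewrite !xpair_eqE oppr_eq0 andbC in cd_neq0 *.
exists (b, - a); last by split => /=; [ring | rewrite -[RHS]oppr0 -det0; ring].
by rewrite !xpair_eqE oppr_eq0 andbC in ab_neq0 *.
Qed.

End TwoByTwo.

Lemma delta_mx_neq0 (R : nzSemiRingType) m n (i : 'I_m) (j : 'I_n) :
  delta_mx i j != 0 :> 'M[R]_(m, n).
Proof. by apply/eqP => /matrixP /(_ i j); rewrite !mxE !eqxx; exact/eqP/oner_neq0. Qed.

Section QuadraticForm.
Variables (R : realFieldType) (n : nat).
Implicit Types (M : 'M[R]_n) (u v : 'rV[R]_n).

Definition bform M u v : R := (u *m M *m v^T) 0 0.
Definition qform M v : R := bform M v v.
Definition sqnorm v : R := \sum_i v 0 i ^+ 2.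
Definition entry_norm M : R := \sum_i \sum_j `|M i j|.

Lemma qformE M v : qform M v = \sum_i \sum_j v 0 i * M i j * v 0 j.
Proof.
rewrite /qform /bform mxE [RHS]exchange_big; apply: eq_bigr => j _.
by rewrite !mxE mulr_suml; apply: eq_bigr.
Qed.

Lemma qformD M1 M2 v : qform (M1 + M2) v = qform M1 v + qform M2 v.
Proof. by rewrite /qform /bform mulmxDr mulmxDl mxE. Qed.

Lemma qformB M1 M2 v : qform (M1 - M2) v = qform M1 v - qform M2 v.
Proof. by rewrite /qform /bform mulmxBr mulmxBl !mxE. Qed.

Lemma qformZ a M v : qform (a *: M) v = a * qform M v.
Proof. by rewrite /qform /bform -scalemxAr -scalemxAl mxE. Qed.

Lemma qformvZ a M v : qform M (a *: v) = a ^+ 2 * qform M v.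
Proof.
by rewrite /qform /bform linearZ /= -scalemxAr -!scalemxAl !mxE mulrA expr2.
Qed.

Lemma qform0 M : qform M 0 = 0.
Proof. by rewrite /qform /bform !mul0mx mxE. Qed.

Lemma qform_scalar a v : qform a%:M v = a * sqnorm v.
Proof.
rewrite qformE /sqnorm mulr_sumr; apply: eq_bigr => i _.
rewrite (bigD1 i) //= big1 => [|j ji]; first by rewrite mxE eqxx mulr1n addr0; ring.
by rewrite mxE eq_sym (negbTE ji) mulr0 mul0r.
Qed.

Lemma qform_const1 v : qform (const_mx 1) v = (\sum_i v 0 i) ^+ 2.
Proof.
rewrite qformE expr2 mulr_suml; apply: eq_bigr => i _; rewrite mulr_sumr.
by apply: eq_bigr => j _; rewrite mxE mulr1.
Qed.

Lemma qform_delta M i : qform M (delta_mx 0 i) = M i i.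
Proof. by rewrite /qform /bform -rowE trmx_delta -colE !mxE. Qed.

Lemma sqnorm_ge0 v : 0 <= sqnorm v.
Proof. by apply: sumr_ge0 => i _; exact: sqr_ge0. Qed.

Lemma sqr_le_sqnorm v i : v 0 i ^+ 2 <= sqnorm v.
Proof. by rewrite /sqnorm (bigD1 i) //= lerDl sumr_ge0 // => j _; exact: sqr_ge0. Qed.

Lemma sqnorm_eq0 v : (sqnorm v == 0) = (v == 0).
Proof.
apply/eqP/eqP => [v0|->]; last by rewrite /sqnorm big1 // => i _; rewrite mxE expr0n.
apply/rowP => i; apply/eqP; rewrite mxE -sqrf_eq0 eq_le sqr_ge0 andbT.
by rewrite -v0 sqr_le_sqnorm.
Qed.

Lemma entry_norm_ge0 M : 0 <= entry_norm M.
Proof. by apply: sumr_ge0 => i _; apply: sumr_ge0. Qed.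

Lemma normr_qform_le M v : `|qform M v| <= entry_norm M * sqnorm v.
Proof.
rewrite qformE /entry_norm mulr_suml (le_trans (ler_norm_sum _ _ _)) //.
apply: ler_sum => i _; rewrite mulr_suml (le_trans (ler_norm_sum _ _ _)) //.
apply: ler_sum => j _.
have vij : `|v 0 i * v 0 j| <= sqnorm v.
  have := sqr_le_sqnorm v i; have := sqr_le_sqnorm v j.
  rewrite -[v 0 i ^+ 2]real_normK ?num_real // -[v 0 j ^+ 2]real_normK ?num_real //.
  have := sqr_ge0 (`|v 0 i| - `|v 0 j|); rewrite normrM.
  move: (normr_ge0 (v 0 i)) (normr_ge0 (v 0 j)); nra.
by rewrite mulrAC normrM mulrC ler_wpM2l.
Qed.

Lemma bform_sym M u v : M^T = M -> bform M u v = bform M v u.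
Proof.
move=> sM; rewrite /bform.
transitivity ((u *m M *m v^T)^T 0 0); first by rewrite [in RHS]mxE.
by rewrite !trmx_mul trmxK sM mulmxA.
Qed.

Lemma qform_add_scale M u v t :
  qform M (u + t *: v) = qform M u + t * (bform M u v + bform M v u) + t ^+ 2 * qform M v.
Proof.
rewrite /qform /bform linearD /= linearZ /= !mulmxDl !mulmxDr.
rewrite -!scalemxAr -!scalemxAl !mxE; ring.
Qed.

Section Semidefinite.
Variable M : 'M[R]_n.
Hypotheses (sM : M^T = M) (psdM : forall v, 0 <= qform M v).

Lemma psd_cauchy_schwarz u v : bform M u v ^+ 2 <= qform M u * qform M v.
Proof.
have disc t : 0 <= qform M u + 2 * t * bform M u v + t ^+ 2 * qform M v.
  by have := psdM (u + t *: v); rewrite qform_add_scale (bform_sym _ _ sM); lra.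
set b := bform M u v in disc *; set a := qform M u in disc *; set c := qform M v in disc *.
have [c_gt0|c_le0] := ltrP 0 c.
  have := disc (- b / c).
  have -> : a + 2 * (- b / c) * b + (- b / c) ^+ 2 * c = a - b ^+ 2 / c.
    by field; rewrite gt_eqF.
  by rewrite subr_ge0 ler_pdivrMr // mulrC.
have c0 : c = 0 by apply/eqP; rewrite eq_le c_le0 psdM.
rewrite c0 mulr0; have [-> //|b_neq0] := eqVneq b 0; first by rewrite expr0n.
have := disc (- (a + 1) / (2 * b)); rewrite c0 mulr0 addr0.
have -> : a + 2 * (- (a + 1) / (2 * b)) * b = -1 by field.
by rewrite ler0N1.
Qed.

(* Writing [v = h *m M], Cauchy-Schwarz gives [|v|^4 <= qform (invmx M)^T v * qform M v],
   and the first factor is at most [entry_norm (invmx M)^T * |v|^2]. *)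
Lemma psd_unitmx_coercive : M \in unitmx ->
  exists2 eps : R, 0 < eps & forall v, eps * sqnorm v <= qform M v.
Proof.
move=> uM; set c := entry_norm (invmx M)^T.
have c_ge0 : 0 <= c by exact: entry_norm_ge0.
exists (c + 1)^-1 => [|v]; first by rewrite invr_gt0; lra.
set h := v *m invmx M.
have hM : h *m M = v by rewrite /h -mulmxA mulVmx // mulmx1.
have hv : bform M h v = sqnorm v.
  by rewrite /bform hM /sqnorm mxE; apply: eq_bigr => i _; rewrite mxE expr2.
have hh : qform M h = qform (invmx M)^T v by rewrite /qform /bform hM /h trmx_mul mulmxA.
have := psd_cauchy_schwarz h v; rewrite hv hh => cs.
have := normr_qform_le (invmx M)^T v; rewrite -/c => /(le_trans (ler_norm _)) hc.
have qv := psdM v; have sv := sqnorm_ge0 v.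
rewrite mulrC ler_pdivrMr; last lra.
have [->|sv_neq0] := eqVneq (sqnorm v) 0; first by rewrite mulr_ge0 //; lra.
have sv_gt0 : 0 < sqnorm v by rewrite lt0r sv_neq0.
have : sqnorm v ^+ 2 <= c * sqnorm v * qform M v.
  exact: le_trans cs (ler_wpM2r qv hc).
rewrite expr2 -mulrA [c * _]mulrC -mulrA ler_pM2l //; nra.
Qed.

End Semidefinite.
End QuadraticForm.

Section RayleighQuotient.
Variables (R : realType) (n : nat) (B C : 'M[R]_n.+1).
Hypotheses (sB : B^T = B) (sC : C^T = C) (C_coercive : forall v, sqnorm v <= qform C v).
Local Open Scope classical_set_scope.

Definition rayleigh_set : set R := [set y | exists v, qform C v = 1 /\ y = - qform B v].
Definition rayleigh_sup : R := sup rayleigh_set.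

Lemma qformC_gt0 v : v != 0 -> 0 < qform C v.
Proof.
rewrite -sqnorm_eq0 => v_neq0; apply: lt_le_trans (C_coercive v).
by rewrite lt0r v_neq0 sqnorm_ge0.
Qed.

Lemma rayleigh_set_quotient v : v != 0 -> rayleigh_set (- qform B v / qform C v).
Proof.
move=> /qformC_gt0 c_gt0; have sc_gt0 : 0 < Num.sqrt (qform C v) by rewrite sqrtr_gt0.
exists ((Num.sqrt (qform C v))^-1 *: v); rewrite !qformvZ exprVn sqr_sqrtr ?ltW //.
by rewrite mulVf ?gt_eqF // mulNr mulrC.
Qed.

Lemma rayleigh_set_ub y : rayleigh_set y -> y <= entry_norm B.
Proof.
move=> [v [qC1 ->]]; rewrite (le_trans (ler_norm _)) // normrN.
rewrite (le_trans (normr_qform_le B v)) // -[leRHS]mulr1.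
by rewrite ler_wpM2l ?entry_norm_ge0 // -qC1.
Qed.

Lemma has_sup_rayleigh_set : has_sup rayleigh_set.
Proof.
split; last by exists (entry_norm B) => y /rayleigh_set_ub.
by exists (- qform B (delta_mx 0 ord0) / qform C (delta_mx 0 ord0));
  exact/rayleigh_set_quotient/delta_mx_neq0.
Qed.

Lemma rayleigh_quotient_le_sup v : v != 0 -> - qform B v / qform C v <= rayleigh_sup.
Proof. by move=> /rayleigh_set_quotient; exact: (sup_upper_bound has_sup_rayleigh_set). Qed.

Definition pencil g := B + g *: C.

Lemma pencil_kernel_le_sup g (w : 'rV[R]_n.+1) :
  w != 0 -> w *m pencil g = 0 -> g <= rayleigh_sup.
Proof.
move=> w_neq0 wK; have c_gt0 := qformC_gt0 w_neq0.
have : qform (pencil g) w = 0 by rewrite /qform /bform wK mul0mx mxE.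
rewrite /pencil qformD qformZ => /eqP; rewrite addr_eq0 => /eqP qB.
by have := rayleigh_quotient_le_sup w_neq0; rewrite qB opprK mulfK ?gt_eqF.
Qed.

Lemma pencil_sup_psd v : 0 <= qform (pencil rayleigh_sup) v.
Proof.
have [->|v_neq0] := eqVneq v 0; first by rewrite qform0.
have := rayleigh_quotient_le_sup v_neq0.
by rewrite /pencil qformD qformZ ler_pdivrMr ?qformC_gt0 //; lra.
Qed.

(* An invertible semidefinite pencil would be coercive, so the pencil at a slightly
   smaller parameter would stay semidefinite, contradicting the minimality of the sup. *)
Lemma pencil_sup_singular : pencil rayleigh_sup \notin unitmx.
Proof.
apply/negP => /psd_unitmx_coercive.
have sK : (pencil rayleigh_sup)^T = pencil rayleigh_sup.
  by rewrite /pencil linearD linearZ /= sB sC.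
case/(_ sK pencil_sup_psd) => eps eps_gt0 coercive.
set del := eps / (entry_norm C + 1).
have c_ge0 := entry_norm_ge0 C.
have del_gt0 : 0 < del by rewrite divr_gt0 //; lra.
suff : rayleigh_sup <= rayleigh_sup - del by lra.
apply: ge_sup; first by case: has_sup_rayleigh_set.
move=> y [v [qC1 ->]].
have := coercive v; rewrite /pencil qformD qformZ qC1 mulr1 => hv.
have := normr_qform_le C v; rewrite qC1 normr1 => hC.
have : del <= eps * sqnorm v.
  rewrite /del ler_pdivrMr; last lra.
  by rewrite -mulrA ler_peMr ?ltW //; have := sqnorm_ge0 v; nra.
lra.
Qed.

End RayleighQuotient.

Section FanDistance.
Variable n : nat.
Local Notation adj := (@fan_adj n).

Lemma fan_adj_sym : symmetric adj.
Proof. by move=> i j; rewrite /fan_adj orbCA; congr [|| _, _ | _]; exact: orbC. Qed.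

Lemma fan_adj0l (j : 'I_n.+1) : j != ord0 -> adj ord0 j.
Proof. by rewrite /fan_adj -(inj_eq val_inj) => /= ->. Qed.

Lemma in_ball1 (i j : 'I_n.+1) : (j \in ball adj i 1) = (j == i) || adj i j.
Proof.
rewrite /= !inE; congr (_ || _); apply/existsP/idP => [[y /andP[]]|h].
  by rewrite inE => /eqP ->.
by exists i; rewrite inE eqxx.
Qed.

Lemma in_ball2 (i j : 'I_n.+1) : j \in ball adj i 2.
Proof.
have hub : ord0 \in ball adj i 1.
  rewrite in_ball1 fan_adj_sym; have [//|i_neq0] := eqVneq ord0 i.
  by rewrite fan_adj0l // eq_sym.
rewrite /= inE; have [->|j_neq0] := eqVneq j ord0; first by rewrite hub.
by rewrite inE; apply/orP; right; apply/existsP; exists ord0; rewrite hub fan_adj0l.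
Qed.

End FanDistance.

Lemma fan_gdist n (i j : 'I_n.+2) :
  gdist (@fan_adj n.+1) i j = if i == j then 0%N else if fan_adj i j then 1%N else 2%N.
Proof.
rewrite /gdist card_ord /=.
have -> : (j \in ball (@fan_adj n.+1) i 0) = (i == j) by rewrite inE eq_sym.
have [//|i_neq_j] := eqVneq i j.
rewrite in_ball1 eq_sym (negbTE i_neq_j) /=; case: ifP => // not_adj.
case: n i j i_neq_j not_adj => [|n] i j.
  by case: i => [[|[|i]] hi] //; case: j => [[|[|j]] hj].
by move=> _ _ /=; rewrite in_ball2.
Qed.

Section FanQEC.
Variables (R : realType) (n : nat).
Local Notation D := (fan_distmx R n.+1).

Definition path_adjmx : 'M[R]_n.+1 :=
  \matrix_(i, j) ((i.+1 == j :> nat) || (j.+1 == i :> nat))%:R.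
Definition fanB : 'M[R]_n.+1 := 2%:M + path_adjmx.
Definition fanC : 'M[R]_n.+1 := 1%:M + const_mx 1.

Lemma fanB_sym : fanB^T = fanB.
Proof.
rewrite /fanB linearD /= tr_scalar_mx; congr (_ + _).
by apply/matrixP => i j; rewrite !mxE orbC.
Qed.

Lemma fanC_sym : fanC^T = fanC.
Proof. by rewrite /fanC linearD /= tr_scalar_mx trmx_const. Qed.

Lemma qform_fanC v : qform fanC v = sqnorm v + (\sum_i v 0 i) ^+ 2.
Proof. by rewrite qformD qform_scalar qform_const1 mul1r. Qed.

Lemma fanC_coercive v : sqnorm v <= qform fanC v.
Proof. by rewrite qform_fanC lerDl sqr_ge0. Qed.

Lemma fan_distmx_hub (j : 'I_n.+1) :
  D ord0 ord0 = 0 /\ D ord0 (lift ord0 j) = 1 /\ D (lift ord0 j) ord0 = 1.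
Proof. by rewrite !mxE !fan_gdist. Qed.

Lemma fan_distmx_path (i j : 'I_n.+1) :
  D (lift ord0 i) (lift ord0 j) = (2 *: const_mx 1 - fanB) i j.
Proof.
rewrite !mxE fan_gdist (inj_eq (@lift_inj _ ord0)) /fan_adj /=.
have [->|i_neq_j] /= := eqVneq i j; first by rewrite gtn_eqF //= mulr1n; ring.
rewrite mulr0n /bump /= !add1n !eqSS (eq_sym (j : nat)) (eq_sym (i : nat)) orbC.
by case: (_ || _); rewrite /=; ring.
Qed.

Lemma fan_qforms (f : 'cV[R]_n.+2) : \sum_i f i 0 = 0 ->
  let v := \row_k f (lift ord0 k) 0 in
  (f^T *m f) 0 0 = qform fanC v /\ (f^T *m D *m f) 0 0 = - qform fanB v.
Proof.
move=> hsum v; have hv k : f (lift ord0 k) 0 = v 0 k by rewrite mxE.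
set t := \sum_k v 0 k.
have f0 : f ord0 0 = - t.
  move: hsum; rewrite big_ord_recl (eq_bigr _ (fun k _ => hv k)) -/t.
  by move/eqP; rewrite addr_eq0 => /eqP.
split.
  rewrite qform_fanC mxE big_ord_recl !mxE f0 /sqnorm -/t.
  under eq_bigr do rewrite mxE hv -expr2.
  by rewrite mulrNN -expr2 addrC.
have -> : f^T *m D *m f = f^T *m D *m f^T^T by rewrite trmxK.
rewrite -/(bform D f^T f^T) -/(qform D f^T) qformE big_ord_recl /=.
rewrite (eq_bigr (fun i : 'I_n.+1 => v 0 i * f ord0 0 +
   \sum_(j < n.+1) v 0 i * (2 *: const_mx 1 - fanB) i j * v 0 j)); last first.
  move=> i _; rewrite big_ord_recl; congr (_ + _).
    by have [_ [_ ->]] := fan_distmx_hub i; rewrite !mxE hv mulr1.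
  by apply: eq_bigr => j _; rewrite fan_distmx_path !mxE !hv.
rewrite big_split /= -(qformE (2 *: const_mx 1 - fanB) v) qformB qformZ qform_const1 -/t.
rewrite big_ord_recl (eq_bigr (fun j : 'I_n.+1 => f ord0 0 * v 0 j)); last first.
  by move=> j _; have [_ [-> _]] := fan_distmx_hub j; rewrite !mxE hv mulr1.
have [-> _] := fan_distmx_hub ord0.
by rewrite -mulr_sumr -mulr_suml -/t !mxE f0; ring.
Qed.

Lemma QEC_fan : QEC D = rayleigh_sup fanB fanC.
Proof.
rewrite /QEC /rayleigh_sup; congr sup; apply/seteqP; split => y /=.
  move=> [f [f1 fsum ->]]; have [fC fB] := fan_qforms fsum.
  by exists (\row_k f (lift ord0 k) 0); rewrite -fC -fB.
move=> [v [vC1 ->]].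
pose f : 'cV[R]_n.+2 := \col_i oapp (fun k => v 0 k) (- \sum_k v 0 k) (unlift ord0 i).
have f0 : f ord0 0 = - \sum_k v 0 k by rewrite mxE unlift_none.
have fl k : f (lift ord0 k) 0 = v 0 k by rewrite mxE liftK.
have fsum : \sum_i f i 0 = 0 by rewrite big_ord_recl f0 (eq_bigr _ (fun k _ => fl k)) addNr.
have fv : \row_k f (lift ord0 k) 0 = v by apply/rowP => k; rewrite mxE fl.
by exists f; have [fC fB] := fan_qforms fsum; rewrite fv in fC fB; rewrite fC fB.
Qed.

Lemma fan_rayleigh_sup_ge : -1 <= rayleigh_sup fanB fanC.
Proof.
have := rayleigh_quotient_le_sup fanB fanC_coercive (delta_mx_neq0 _ 0 (@ord0 n)).
by rewrite !qform_delta !mxE /= mulr1n addr0 mulNr divff // pnatr_eq0.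
Qed.

End FanQEC.

Section FanKernel.
Variables (R : realType) (n : nat).
Local Notation K g := (pencil (@fanB R n) (@fanC R n) g).

(* Padding by zeros at [0] and [n.+2] makes every row of [K g] a three-term relation. *)
Definition padded (v : 'rV[R]_n.+1) (m : nat) : R := \sum_(i < n.+1 | i.+1 == m) v 0 i.

Lemma padded0 v : padded v 0 = 0.
Proof. by rewrite /padded big_pred0. Qed.

Lemma padded_out v : padded v n.+2 = 0.
Proof. by rewrite /padded big_pred0 // => i; rewrite eqSS ltn_eqF. Qed.

Lemma padded_lift v (j : 'I_n.+1) : padded v j.+1 = v 0 j.
Proof. by rewrite /padded (big_pred1 j) // => i; rewrite eqSS. Qed.

Lemma mulmx_pencil_fan (w : nat -> R) g (j : 'I_n.+1) : w 0 = 0 -> w n.+2 = 0 ->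
  ((\row_i w i.+1) *m K g) 0 j =
    w j + (2 + g) * w j.+1 + w j.+2 + g * \sum_(i < n.+1) w i.+1.
Proof.
move=> w0 wn; set v := \row_i w i.+1.
have pv m : (m <= n.+2)%N -> padded v m = w m.
  case: m => [_|m]; first by rewrite padded0.
  rewrite ltnS leq_eqVlt => /predU1P[->|lt_mn]; first by rewrite padded_out.
  by rewrite (padded_lift v (Ordinal lt_mn)) mxE.
have vA : (v *m path_adjmx R n) 0 j = padded v j + padded v j.+2.
  rewrite mxE /padded [X in _ = X + _]big_mkcond [X in _ = _ + X]big_mkcond -big_split.
  apply: eq_bigr => i _ /=; rewrite /path_adjmx !mxE eqSS (eq_sym (i : nat)).
  have [<-|_] := eqVneq i.+1 j; last by case: eqP; rewrite /= ?mulr1 ?mulr0 add0r.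
  by rewrite gtn_eqF // mulr1 addr0.
have vJ : (v *m const_mx 1) 0 j = \sum_i v 0 i.
  by rewrite mxE; apply: eq_bigr => i _; rewrite [const_mx 1 _ _]mxE mulr1.
rewrite /pencil /fanB /fanC mulmxDr -scalemxAr !mulmxDr !mul_mx_scalar.
move: vA vJ; set X := v *m path_adjmx R n; set Y := v *m const_mx 1 => vA vJ.
transitivity (2 * v 0 j + X 0 j + g * (1 * v 0 j + Y 0 j)); first by rewrite !mxE.
have jn := ltn_ord j.
rewrite vA vJ (eq_bigr (fun i : 'I_n.+1 => w i.+1)) => [|i _]; last by rewrite mxE.
by rewrite mxE !pv; [ring | lia..].
Qed.

Lemma row_padded v : \row_i padded v i.+1 = v.
Proof. by apply/rowP => i; rewrite mxE padded_lift. Qed.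

Lemma fan_kernel_det (x : R) (v : 'rV[R]_n.+1) :
  v != 0 -> v *m K (- 2 * x - 2) = 0 -> fan_det x n.+1 = 0.
Proof.
move=> v_neq0 vK; set w := padded v; set s := \sum_i v 0 i; set k := 2 * x + 2.
have w0 : w 0 = 0 := padded0 v.
have wn : w n.+2 = 0 := padded_out v.
have wS m : (m < n.+1)%N -> w m.+2 = 2 * x * w m.+1 - w m + k * s.
  move=> lt_mn; have := mulmx_pencil_fan (- 2 * x - 2) (Ordinal lt_mn) w0 wn.
  rewrite row_padded vK mxE /= (eq_bigr (fun i : 'I_n.+1 => v 0 i)) => [E|i _]; last first.
    exact: padded_lift.
  by apply/eqP; rewrite -subr_eq0; apply/eqP; rewrite [RHS]E /k /s; ring.
have wE := cheb_recurrence w0 wS.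
have e1 : cheb x n.+2 * w 1%N + k * cheb_sum x n.+2 * s = 0.
  by rewrite -wn (wE n.+2) //; ring.
have sE : s = w 1%N * cheb_sum x n.+2 + k * s * \sum_(i < n.+2) cheb_sum x i.
  rewrite -sum_cheb_comb; apply: eq_bigr => i _.
  by rewrite -(wE i.+1) /w ?padded_lift // ltnS ltnW.
have e2 : cheb_sum x n.+2 * w 1%N + (k * \sum_(i < n.+2) cheb_sum x i - 1) * s = 0.
  by apply/eqP; rewrite mulrBl mul1r addrA subr_eq0 {2}sE; apply/eqP; ring.
apply/eqP; apply: contraNT v_neq0 => det_neq0.
have det_eq : cheb x n.+2 * (k * \sum_(i < n.+2) cheb_sum x i - 1)
    - k * cheb_sum x n.+2 * cheb_sum x n.+2 = fan_det x n.+1 by rewrite /fan_det /k; ring.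
have [] := det2_cramer e1 e2; rewrite det_eq => /eqP + /eqP.
rewrite !mulf_eq0 (negbTE det_neq0) /= => /eqP w10 /eqP s0.
apply/eqP/rowP => j; rewrite !mxE -padded_lift -/w (wE j.+1 (leqW (ltn_ord j))).
by rewrite w10 s0; ring.
Qed.

Lemma fan_det_kernel (x : R) : fan_det x n.+1 = 0 ->
  exists2 v : 'rV[R]_n.+1, v != 0 & v *m K (- 2 * x - 2) = 0.
Proof.
move=> det0; set k := 2 * x + 2; set Z := \sum_(i < n.+2) cheb_sum x i.
have det0' : cheb x n.+2 * (k * Z - 1) - k * cheb_sum x n.+2 * cheb_sum x n.+2 = 0.
  by rewrite -det0 /fan_det /k /Z; ring.
have [[p q] /= pq_neq0 [e1 e2]] := det2_kernel det0'.
pose w m := p * cheb x m + k * q * cheb_sum x m.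
have w0 : w 0%N = 0 by rewrite /w cheb0 /cheb_sum big_ord0; ring.
have wn : w n.+2 = 0 by rewrite /w -e1; ring.
have sw : \sum_(i < n.+1) w i.+1 = q.
  rewrite sum_cheb_comb -/Z; apply/eqP; rewrite -subr_eq0; apply/eqP.
  by rewrite -[X in _ = X]e2; ring.
exists (\row_i w i.+1).
  apply: contraTneq pq_neq0 => /rowP v0.
  have q0 : q = 0 by rewrite -sw; apply: big1 => i _; have := v0 i; rewrite !mxE.
  have := v0 ord0; rewrite !mxE /w cheb1 /cheb_sum big_ord1 cheb0 q0.
  by rewrite mulr0 mulr1 addr0 => ->; rewrite negbK.
apply/rowP => j; rewrite mulmx_pencil_fan // sw mxE /w chebSS cheb_sumSS /k; ring.
Qed.

Lemma fan_kernel_root (x : R) (v : 'rV[R]_n.+1) :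
  v != 0 -> v *m K (- 2 * x - 2) = 0 -> root (phi R n.+1) x.
Proof.
move=> v_neq0 /(fan_kernel_det v_neq0) det0; apply/rootP.
have := fan_det_phi x n; rewrite det0 mulr0 => /eqP; rewrite eq_sym mulf_eq0.
by rewrite oppr_eq0 pnatr_eq0 => /eqP.
Qed.

Lemma fan_root_kernel (x : R) : x != 1 -> root (phi R n.+1) x ->
  exists2 v : 'rV[R]_n.+1, v != 0 & v *m K (- 2 * x - 2) = 0.
Proof.
move=> x_neq1 /rootP phi0; apply: fan_det_kernel.
have := fan_det_phi x n; rewrite phi0 mulr0 => /eqP; rewrite mulf_eq0.
by rewrite mulf_eq0 pnatr_eq0 sqrf_eq0 subr_eq0 (negbTE x_neq1) => /eqP.
Qed.

End FanKernel.

Unset Implicit Arguments.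

Theorem mainTheorem9 (R : realType) (n : nat) (hn : (1 <= n)%N) :
  exists alpha : R,
    [/\ root (phi R n) alpha,
        (forall x : R, root (phi R n) x -> alpha <= x)
      & QEC (fan_distmx R n) = - 2%:R * alpha - 2%:R].
Proof.
case: n hn => [//|n] _; rewrite QEC_fan.
set g := rayleigh_sup (fanB R n) (fanC R n).
exists (- (g + 2) / 2); split; last by field.
- have := pencil_sup_singular (fanB_sym R n) (fanC_sym R n) (@fanC_coercive R n).
  rewrite -/g unitmxE unitfE negbK => /det0P[v v_neq0 vK].
  by apply: (fan_kernel_root v_neq0); have -> : - 2 * (- (g + 2) / 2) - 2 = g by field.
- (* [1] is a root of every [phi_n], not seen by the pencil; [g >= -1] keeps [alpha <= 1]. *)
  move=> y phi_y; have [->|y_neq1] := eqVneq y 1.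
    by have := fan_rayleigh_sup_ge R n; rewrite -/g; lra.
  have [w w_neq0 wK] := fan_root_kernel y_neq1 phi_y.
  by have := pencil_kernel_le_sup (@fanC_coercive R n) w_neq0 wK; rewrite -/g; lra.
Qed.
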